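(* Let $n\ge1$ and let $\mu$ be the Möbius function of the finite poset $(\hat N^n,\le)$, where $\le$ is the componentwise order, and set $M(\vec v)=\mu((1,1,\dots,1),\vec v)$ (note $(1,\dots,1)$ is the minimum). Then for $\vec v=(v_1,\dots,v_n)\in\hat N^n$: if $v_i\in\{1,i\}$ for every $i$, then $M(\vec v)=(-1)^{t_{\vec v}}$ where $t_{\vec v}=\#\{i\ge2:\ v_i=i\}$; otherwise $M(\vec v)=0$.
   Context: $Y_n$ is the set of planar rooted binary trees with $n$ internal vertices ($n+1$ leaves) up to isotopy, with grafting $\tau_1\vee\tau_2$ (new root, left subtree $\tau_1$, right subtree $\tau_2$). A complete expression in $x_1,\dots,x_{n+1}$ is a full binary parenthesization of $x_1\cdots x_{n+1}$ (every product of two factors, including the outermost, in parentheses); trees correspond bijectively to complete expressions via $|\mapsto x_1$, $\tau_1\vee\tau_2\mapsto(E_1E_2)$ with consecutive relabelling. Name of $\tau\in Y_n$: the vector $\vec v\in\mathbb N^n$ with $v_i=i$ if at least one left parenthesis stands immediately left of $x_i$ in the complete expression of $\tau$; otherwise the rightmost of the right parentheses immediately following $x_i$ matches a left parenthesis in the run immediately preceding some $x_j$, and $v_i=j$. $\hat N^n$ is the set of names of trees of $Y_n$. The componentwise order is $\vec v\le\vec w$ iff $v_i\le w_i$ for all $i$ (this order on names corresponds to the Tamari order on trees). *)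

From HB Require Import structures.
From mathcomp Require Import all_boot all_order all_algebra.
From mathcomp Require Import zify.
Set Implicit Arguments. Unset Strict Implicit. Unset Printing Implicit Defensive.
Import GRing.Theory Num.Theory.

(* Planar rooted binary trees (up to isotopy = this inductive type). *)
Inductive tree := Leaf | Node of tree & tree.

Fixpoint tree_eqb (t u : tree) : bool :=
  match t, u with
  | Leaf, Leaf => true
  | Node l r, Node l' r' => tree_eqb l l' && tree_eqb r r'
  | _, _ => false
  end.

Lemma tree_eqP : Equality.axiom tree_eqb.
Proof.
elim=> [|l IHl r IHr] [|l' r'] /=; try by constructor.
by apply: (iffP andP) => [[/IHl-> /IHr->]|[<- <-]]; split; [apply/IHl|apply/IHr].
Qed.

HB.instance Definition _ := hasDecEq.Build tree tree_eqP.

Fixpoint internal (t : tree) : nat :=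
  match t with Leaf => 0 | Node l r => (internal l + internal r).+1 end.
Fixpoint leaves (t : tree) : nat :=
  match t with Leaf => 1 | Node l r => leaves l + leaves r end.

Fixpoint trees_le (n : nat) : seq tree :=
  match n with
  | 0 => [:: Leaf]
  | n'.+1 => Leaf :: [seq Node lr.1 lr.2 | lr <- [seq (l, r) | l <- trees_le n', r <- trees_le n']]
  end.
Definition Y (n : nat) : seq tree := [seq t <- trees_le n | internal t == n].

Lemma mem_trees_le n t : internal t <= n -> t \in trees_le n.
Proof.
elim: n t => [|n IH] [|l r] //= H; rewrite inE //.
apply/orP; right; apply/mapP; exists (l, r) => //.
apply/allpairsP; exists (l, r) => /=; split=> //; apply: IH; lia.
Qed.

Lemma mem_Y n t : (t \in Y n) = (internal t == n).
Proof.
rewrite mem_filter; case: eqP => //= <-; exact: mem_trees_le.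
Qed.

(* Complete expressions: tokens '(' , ')' and x_k. *)
Inductive token := LP | RP | X of nat.

Fixpoint expr_from (t : tree) (k : nat) : seq token :=
  match t with
  | Leaf => [:: X k]
  | Node l r => LP :: expr_from l k ++ expr_from r (k + leaves l) ++ [:: RP]
  end.
Definition expr (t : tree) : seq token := expr_from t 1.

Definition is_LP (tk : token) : bool := if tk is LP then true else false.
Definition is_Xi (i : nat) (tk : token) : bool := if tk is X k then k == i else false.

(* position (0-based) of x_i in s *)
Definition pos_of (s : seq token) (i : nat) : nat := find (is_Xi i) s.
Fixpoint lead_RP (s : seq token) : nat :=
  match s with RP :: s' => (lead_RP s').+1 | _ => 0 end.
(* Given the REVERSED prefix s of an expression strictly before a right
   parenthesis, at nesting depth d (d = 1 initially), the distance back to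
   the matching left parenthesis. *)
Fixpoint match_len (s : seq token) (d : nat) : nat :=
  match s with
  | [::] => 0
  | LP :: s' => if d == 1 then 1 else (match_len s' d.-1).+1
  | RP :: s' => (match_len s' d.+1).+1
  | X _ :: s' => (match_len s' d).+1
  end.
Fixpoint first_label (s : seq token) : nat :=
  match s with
  | [::] => 0
  | X k :: _ => k
  | _ :: s' => first_label s'
  end.

Definition name_comp (s : seq token) (i : nat) : nat :=
  let p := pos_of s i in
  if (0 < p) && is_LP (nth RP s p.-1) then i
  else
    let q := p + lead_RP (drop p.+1 s) in      (* rightmost ')' of the run after x_i *)
    let m := q - match_len (rev (take q s)) 1 in (* its matching '(' *)
    first_label (drop m s).                   (* the x_j that run precedes *)

Definition name (t : tree) : seq nat :=
  [seq name_comp (expr t) i | i <- iota 1 (internal t)].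

Definition hatN (n : nat) : seq (seq nat) := undup [seq name t | t <- Y n].

Definition vle (v w : seq nat) : bool := all2 leq v w.
Definition vlt (v w : seq nat) : bool := (v != w) && vle v w.

(* Möbius function of the finite poset (P, vle):
   mu(x,x) = 1, mu(x,y) = - sum_{x <= z < y} mu(x,z) for x < y, 0 otherwise.
   Computed with fuel; fuel size P exceeds the length of any chain in P. *)
Fixpoint mob_aux (P : seq (seq nat)) (k : nat) (x y : seq nat) : int :=
  if x == y then 1%R else
  match k with
  | 0 => 0%R
  | k'.+1 => if vlt x y then (- \sum_(z <- P | vle x z && vlt z y) mob_aux P k' x z)%R
             else 0%R
  end.
Definition mobius (P : seq (seq nat)) (x y : seq nat) : int := mob_aux P (size P) x y.

(* v_i, 1-based *)
Definition vcoord (v : seq nat) (i : nat) : nat := nth 0 v i.-1.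

From mathcomp Require Import all_boot all_order all_algebra.
From mathcomp Require Import zify.
Set Implicit Arguments. Unset Strict Implicit. Unset Printing Implicit Defensive.
Import GRing.Theory Num.Theory.

(* Names can be computed structurally, which shows that 1 <= v_i <= i and that
   every vector with v_i in {1, i} is a name.  The claimed function g has
   g(1,...,1) = 1 and sums to 0 below every other name y: such a y has some
   i > 1 with y_i = i, and switching the i-th coordinate between 1 and i is a
   sign-reversing involution on the vectors below y where g does not vanish.
   These two properties characterise the Moebius function. *)

(* The internal vertex of [Node l r] is recorded at the last leaf of [l]; its
   coordinate is the label [k] of the first leaf of the subtree. *)
Fixpoint name_from (t : tree) (k : nat) : seq nat :=
  match t with
  | Leaf => [::]
  | Node l r => name_from l k ++ k :: name_from r (k + leaves l)
  end.

Lemma leaves_internal t : leaves t = (internal t).+1.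
Proof. by elim: t => //= l -> r ->; lia. Qed.

Lemma size_name_from t k : size (name_from t k) = internal t.
Proof. by elim: t k => //= l IHl r IHr k; rewrite size_cat /= IHl IHr; lia. Qed.

Lemma count_Xi_expr_from t k i :
  count (is_Xi i) (expr_from t k) = (k <= i < k + leaves t).
Proof.
elim: t k => [|l IHl r IHr] k /=; first by rewrite addn0 addn1 ltnS -eqn_leq eq_sym.
by rewrite count_cat /= count_cat /= IHl IHr; lia.
Qed.

Lemma has_Xi_before t k G i s :
  expr_from t k = G ++ X i :: s -> ~~ has (is_Xi i) G.
Proof.
move=> E; have := count_Xi_expr_from t k i.
rewrite E count_cat /= eqxx has_count; lia.
Qed.

Lemma last_expr_from x t k : ~~ is_LP (last x (expr_from t k)).
Proof. by case: t => //= l r; rewrite !last_cat. Qed.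

Lemma lead_RP_nseq m s : lead_RP (nseq m RP ++ s) = m + lead_RP s.
Proof. by elim: m => //= m ->. Qed.

Lemma lead_RP_expr_from t k s : lead_RP (expr_from t k ++ s) = 0.
Proof. by case: t. Qed.

Lemma first_label_expr_from t k s : first_label (expr_from t k ++ s) = k.
Proof. by elim: t k s => //= l IHl r _ k s; rewrite -catA IHl. Qed.

Lemma match_len_expr_from t k s d : 0 < d ->
  match_len (rev (expr_from t k) ++ s) d = size (expr_from t k) + match_len s d.
Proof.
elim: t k s d => [|l IHl r IHr] k s d d_gt0 /=; first by rewrite add1n.
rewrite rev_cons !rev_cat /= -cats1 -!catA IHr // IHl //.
by case: d d_gt0 => // d _ /=; rewrite !size_cat /=; lia.
Qed.

Lemma expr_from_last_leaf l r k : exists G m,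
  expr_from (Node l r) k = G ++ X (k + leaves (Node l r)).-1 :: nseq m RP /\
  forall x, ~~ is_LP (last x G).
Proof.
elim: r l k => [|r1 _ r2 IHr] l k.
  exists (LP :: expr_from l k), 1; split; first by rewrite /= addnA addn1.
  by move=> x /=; apply: last_expr_from.
have [G [m [E lastG]]] := IHr r1 (k + leaves l).
exists (LP :: expr_from l k ++ G), m.+1; split; last by move=> x /=; rewrite last_cat.
pose er := expr_from (Node r1 r2) (k + leaves l).
rewrite -[expr_from _ k]/(LP :: expr_from l k ++ er ++ [:: RP]).
have nseqS : nseq m RP ++ [:: RP] = nseq m.+1 RP by elim: (m) => //= ? ->.
by rewrite /er E /= -!catA /= nseqS !addnA.
Qed.

Lemma name_comp_after_LP P i S :
  ~~ has (is_Xi i) P -> name_comp (rcons P LP ++ X i :: S) i = i.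
Proof.
move=> noXP; rewrite /name_comp /pos_of find_cat has_rcons (negbTE noXP).
by rewrite /= eqxx addn0 size_rcons nth_cat size_rcons ltnSn nth_rcons ltnn eqxx.
Qed.

Lemma name_comp_last_leaf l r k P S :
  ~~ has (is_Xi (k + leaves (Node l r)).-1) P -> lead_RP S = 0 ->
  name_comp (P ++ expr_from (Node l r) k ++ S) (k + leaves (Node l r)).-1 = k.
Proof.
set i := _.-1 => noXP noRP_S.
have [G [m [EG lastG]]] := expr_from_last_leaf l r k; rewrite -/i in EG.
set el := expr_from l k; set er := expr_from r (k + leaves l).
set E := P ++ _ ++ S.
have E_at_Xi : E = (P ++ G) ++ X i :: (nseq m RP ++ S) by rewrite /E EG -!catA.
have E_at_RP : E = (P ++ LP :: el ++ er) ++ RP :: S by rewrite /E /= -!catA /= -?catA.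
have G_gt0 : 0 < size G by case: (G) EG.
have size_G : size G + m = (size el + size er).+1.
  by have := congr1 size EG; rewrite /= -/el -/er !size_cat /= size_nseq; lia.
have pos_Xi : pos_of E i = size (P ++ G).
  rewrite E_at_Xi /pos_of find_cat has_cat (negbTE noXP) (negbTE (has_Xi_before EG)).
  by rewrite /= eqxx addn0.
have not_LP : is_LP (nth RP E (pos_of E i).-1) = false.
  rewrite pos_Xi E_at_Xi nth_cat ifT; last by rewrite size_cat; lia.
  by rewrite nth_last last_cat; apply/negbTE.
have run_RP : lead_RP (drop (pos_of E i).+1 E) = m.
  rewrite pos_Xi E_at_Xi drop_cat ltnNge leqnSn /= subSnn /= drop0.
  by rewrite lead_RP_nseq noRP_S addn0.
have run_end : pos_of E i + m = size (P ++ LP :: el ++ er).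
  by rewrite pos_Xi !size_cat /= size_cat; lia.
have match_LP : match_len (rev (P ++ LP :: el ++ er)) 1 = (size el + size er).+1.
  rewrite rev_cat rev_cons rev_cat -!cats1 -!catA.
  by rewrite match_len_expr_from // match_len_expr_from //= -/el -/er; lia.
rewrite /name_comp -/E not_LP andbF run_RP run_end [in take _ E]E_at_RP take_size_cat //.
rewrite match_LP (_ : _ - _ = size P); last by rewrite !size_cat /= size_cat; lia.
by rewrite /E drop_size_cat // first_label_expr_from.
Qed.

Lemma name_comp_expr_from t k i P S :
  k <= i -> i.+1 < k + leaves t -> ~~ has (is_Xi i) P ->
  name_comp (P ++ expr_from t k ++ S) i = nth 0 (name_from t k) (i - k).
Proof.
elim: t k i P S => [|l IHl r IHr] k i P S le_ki /=; first lia.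
move=> lt_i noXP; set el := expr_from l k; set er := expr_from r (k + leaves l).
have size_l := size_name_from l k; have leaves_l := leaves_internal l.
rewrite /= -!catA /= nth_cat size_l.
have [in_l|not_in_l] := ltnP i.+1 (k + leaves l).
  rewrite ifT; last lia.
  by rewrite -cat_rcons IHl // has_rcons.
have [le_l|in_r] := ltnP i (k + leaves l).
  have i_last : i = (k + leaves l).-1 by lia.
  subst i; rewrite ifF; last lia.
  rewrite (_ : _ - k - internal l = 0) /=; last lia.
  have noRP : lead_RP (er ++ RP :: S) = 0 by apply: lead_RP_expr_from.
  rewrite {}/el; clearbody er.
  case: l noXP {IHl size_l leaves_l le_l not_in_l lt_i le_ki} => [|l1 l2] noXP.
    by rewrite /= addn1 /= in noXP *; rewrite -cat_rcons name_comp_after_LP.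
  by rewrite -cat_rcons name_comp_last_leaf ?has_rcons.
rewrite ifF; last lia.
rewrite -cat_cons catA IHr //; last 2 first.
- by rewrite -addnA.
- by rewrite has_cat negb_or noXP /= has_count count_Xi_expr_from; lia.
by rewrite (_ : i - k - internal l = (i - (k + leaves l)).+1) //; lia.
Qed.

Lemma name_name_from t : name t = name_from t 1.
Proof.
apply: (@eq_from_nth _ 0); first by rewrite size_map size_iota size_name_from.
rewrite size_map size_iota => j lt_j.
rewrite (nth_map 0) ?size_iota // nth_iota // /expr -[expr_from t 1]cats0 -[_ ++ [::]]cat0s.
by rewrite name_comp_expr_from ?add1n ?subn1 ?leaves_internal //; lia.
Qed.

Lemma name_from_bounds t k j : j < internal t -> k <= nth 0 (name_from t k) j <= k + j.
Proof.
elim: t k j => [|l IHl r IHr] k j //= lt_j.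
rewrite nth_cat size_name_from; have [in_l|] := ltnP j (internal l).
  by have := IHl k j in_l; lia.
rewrite leq_eqVlt => /orP[/eqP <-|in_r]; first by rewrite subnn /=; lia.
rewrite -(subnSK in_r) /=; have := IHr (k + leaves l) (j - (internal l).+1).
by rewrite leaves_internal; lia.
Qed.

(* The witness is the root of the first non-leaf right subtree met along the
   left branch. *)
Lemma name_from_const_or_max t k : all (pred1 k) (name_from t k) \/
  exists j, 0 < j < internal t /\ nth 0 (name_from t k) j = k + j.
Proof.
elim: t k => [|l IHl r _] k /=; first by left.
have [const_l|[j [lt_j max_j]]] := IHl k; last first.
  by right; exists j; rewrite nth_cat size_name_from ifT //; lia.
case: r => [|r1 r2]; first by left; rewrite all_cat const_l /= eqxx.
right; exists (internal l).+1; split; first by rewrite /=; lia.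
rewrite nth_cat size_name_from ltnNge leqnSn /= subSn // subnn /=.
have := @name_from_bounds (Node r1 r2) (k + leaves l) 0 isT.
by rewrite leaves_internal /=; lia.
Qed.

Fixpoint grow_right (t : tree) : tree :=
  match t with Leaf => Node Leaf Leaf | Node l r => Node l (grow_right r) end.

Lemma internal_grow_right t : internal (grow_right t) = (internal t).+1.
Proof. by elim: t => //= l _ r ->; rewrite addnS. Qed.

Lemma name_from_grow_right t k :
  name_from (grow_right t) k = rcons (name_from t k) (k + internal t).
Proof.
elim: t k => [|l _ r IHr] k /=; first by rewrite addn0.
by rewrite IHr rcons_cat /= leaves_internal; congr (_ ++ _ :: rcons _ _); lia.
Qed.

Lemma name_from_extremal v :
  (forall j, j < size v -> nth 0 v j = 1 \/ nth 0 v j = j.+1) ->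
  exists t, internal t = size v /\ name_from t 1 = v.
Proof.
elim/last_ind: v => [|v x IHv] ext_v; first by exists Leaf.
have [t [size_t name_t]] : exists t, internal t = size v /\ name_from t 1 = v.
  by apply: IHv => j lt_j; have := ext_v j; rewrite size_rcons nth_rcons lt_j; apply; lia.
have := ext_v (size v); rewrite size_rcons nth_rcons ltnn eqxx => /(_ (ltnSn _)) [->|->].
  by exists (Node t Leaf); rewrite /= cats1 name_t size_t addn0.
by exists (grow_right t); rewrite internal_grow_right name_from_grow_right size_t name_t add1n.
Qed.

Lemma mem_hatN n y : y \in hatN n <-> exists t, internal t = n /\ y = name_from t 1.
Proof.
rewrite mem_undup; split.
  by case/mapP => t; rewrite mem_Y => /eqP <- ->; exists t; rewrite name_name_from.
by case=> t [<- ->]; apply/mapP; exists t; rewrite ?mem_Y ?name_name_from.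
Qed.

Lemma hatN_coord_bounds n y : y \in hatN n ->
  size y = n /\ forall i, 0 < i <= n -> 1 <= vcoord y i <= i.
Proof.
case/mem_hatN => t [<- ->]; rewrite size_name_from; split=> // i lt_i.
by have := @name_from_bounds t 1 i.-1; rewrite /vcoord; lia.
Qed.

Lemma hatN_max_coord n y : y \in hatN n -> y != nseq n 1 ->
  exists2 i, 1 < i <= n & vcoord y i = i.
Proof.
case/mem_hatN => t [<- ->] y_neq.
have [/all_pred1P|[j [lt_j max_j]]] := name_from_const_or_max t 1.
  by rewrite size_name_from => y_eq; rewrite y_eq eqxx in y_neq.
by exists j.+1; rewrite /vcoord /= ?max_j; lia.
Qed.

Definition extremal (n : nat) (v : seq nat) : bool :=
  all (fun i => (vcoord v i == 1) || (vcoord v i == i)) (iota 1 n).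

Lemma extremalP n v :
  extremal n v <-> forall i, 0 < i <= n -> vcoord v i = 1 \/ vcoord v i = i.
Proof.
split => [/allP ext_v i lt_i|ext_v].
  have /ext_v/orP[/eqP|/eqP] : i \in iota 1 n by rewrite mem_iota; lia.
  - by left.
  - by right.
apply/allP => i; rewrite mem_iota => lt_i.
by have [->|->] := ext_v i ltac:(lia); rewrite eqxx ?orbT.
Qed.

Lemma extremal_hatN n v : size v = n -> extremal n v -> v \in hatN n.
Proof.
move=> size_v /extremalP ext_v; apply/mem_hatN.
have [|t [size_t <-]] := @name_from_extremal v; last by exists t; rewrite size_t size_v.
by move=> j lt_j; have := ext_v j.+1; rewrite /vcoord /=; apply; lia.
Qed.

Lemma vle_refl v : vle v v.
Proof. by elim: v => //= x s ->; rewrite leqnn. Qed.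

Lemma vle_trans u v w : vle u v -> vle v w -> vle u w.
Proof.
elim: u v w => [|a u IH] [|b v] [|c w] //= /andP[le_ab le_uv] /andP[le_bc le_vw].
by rewrite (leq_trans le_ab le_bc) (IH _ _ le_uv le_vw).
Qed.

Lemma vle_anti u v : vle u v -> vle v u -> u = v.
Proof.
elim: u v => [|a u IH] [|b v] //= /andP[le_ab le_uv] /andP[le_ba le_vu].
by rewrite (IH _ le_uv le_vu); congr (_ :: _); apply/eqP; rewrite eqn_leq le_ab le_ba.
Qed.

Lemma vltxx v : vlt v v = false.
Proof. by rewrite /vlt eqxx. Qed.

Lemma vlt_trans u v w : vlt u v -> vlt v w -> vlt u w.
Proof.
move=> /andP[neq_uv le_uv] /andP[neq_vw le_vw]; rewrite /vlt (vle_trans le_uv le_vw) andbT.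
by apply: contraNneq neq_vw => eq_uw; rewrite -eq_uw in le_vw *; rewrite (vle_anti le_uv le_vw).
Qed.

Lemma vleP v w : vle v w <->
  size v = size w /\ forall i, 0 < i <= size v -> vcoord v i <= vcoord w i.
Proof.
elim: v w => [|a v IH] [|b w] /=; try by split=> // -[].
split=> [/andP[le_ab /IH[size_vw le_vw]]|[[size_vw] le_vw]].
  split=> [|[|[|i]]] //=; first by rewrite size_vw.
  by move=> lt_i; apply: (le_vw i.+1).
apply/andP; split; first exact: (le_vw 1).
by apply/IH; split=> // -[|i] // lt_i; apply: (le_vw i.+2).
Qed.

Lemma eq_vcoord v w : size v = size w ->
  (forall i, 0 < i <= size v -> vcoord v i = vcoord w i) -> v = w.
Proof.
move=> size_vw eq_vw; apply: (eq_from_nth (x0 := 0)) => // j lt_j.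
exact: (eq_vw j.+1).
Qed.

Lemma ltn_count (T : eqType) (a b : pred T) (s : seq T) z :
  subpred a b -> z \in s -> b z -> ~~ a z -> count a s < count b s.
Proof.
move=> sub_ab; elim: s => // x s IH; rewrite inE => /orP[/eqP <-|z_s] bz naz /=.
  by rewrite bz (negbTE naz) add0n add1n ltnS sub_count.
have le_x : a x <= b x by case/boolP: (a x) => // /sub_ab ->.
by rewrite -addnS leq_add ?IH.
Qed.

Lemma sum_sign_reversing (T : eqType) (R : numDomainType) (s : seq T)
    (f : T -> T) (F : T -> R) :
  uniq s -> {in s, forall z, f z \in s} -> {in s, cancel f f} ->
  {in s, forall z, F (f z) = - F z}%R -> (\sum_(z <- s) F z)%R = 0%R.
Proof.
move=> s_uniq f_s fK F_f.
have perm_f : perm_eq s (map f s).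
  apply: uniq_perm => //.
    by rewrite map_inj_in_uniq // => z1 z2 z1_s z2_s /(congr1 f); rewrite !fK.
  move=> z; apply/idP/mapP => [z_s|[y y_s ->]]; last exact: f_s.
  by exists (f z); rewrite ?fK ?f_s.
apply/eqP; rewrite -eqNr -sumrN [X in _ == X](perm_big _ perm_f) big_map.
by apply/eqP/eq_big_seq => z z_s; rewrite F_f.
Qed.

Lemma sign_count_flip (T : eqType) (R : ringType) (s : seq T) (a b : pred T) x :
  uniq s -> x \in s -> {in s, forall y, y != x -> a y = b y} -> a x = ~~ b x ->
  ((-1) ^+ count a s = - (-1) ^+ count b s :> R)%R.
Proof.
move=> s_uniq x_s eq_ab ax; have perm_x := perm_to_rem x_s.
rewrite (permP perm_x a) (permP perm_x b) /= (@eq_in_count _ a b); last first.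
  by move=> y; rewrite mem_rem_uniq // inE => /andP[neq_yx y_s]; apply: eq_ab.
by rewrite !exprD ax; case: (b x); rewrite /= ?expr1 ?expr0 ?mulN1r ?mul1r ?opprK.
Qed.

Section MobiusCharacterization.

Variables (P : seq (seq nat)) (x : seq nat) (g : seq nat -> int).
Hypotheses (P_uniq : uniq P) (x_min : {in P, forall y, vle x y}) (g_x : g x = 1%R).
Hypothesis g_sum : {in P, forall y, y != x -> \sum_(z <- P | vle z y) g z = 0}%R.

Lemma big_vle_vlt (F : seq nat -> int) y : y \in P ->
  (\sum_(z <- P | vle z y) F z = F y + \sum_(z <- P | vlt z y) F z)%R.
Proof.
move=> y_P; rewrite big_mkcond (bigD1_seq y) //= vle_refl.
rewrite [in RHS]big_mkcond (bigD1_seq y) //= vltxx add0r.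
by congr (_ + _)%R; apply: eq_bigr => z neq_zy; rewrite /vlt neq_zy.
Qed.

(* The number of strict predecessors of [y] bounds the recursion depth. *)
Lemma mob_aux_char k y : y \in P -> count (vlt^~ y) P < k -> mob_aux P k x y = g y.
Proof.
elim: k y => [|k IHk] y y_P // lt_k /=.
have [<-|neq_xy] := eqVneq x y; first by rewrite g_x.
have -> : vlt x y by rewrite /vlt neq_xy x_min.
have -> : (\sum_(z <- P | vle x z && vlt z y) mob_aux P k x z =
           \sum_(z <- P | vlt z y) g z)%R.
  rewrite big_seq_cond [RHS]big_seq_cond; apply: eq_big => [z|z /and3P[z_P _ lt_zy]].
    by case z_P: (z \in P); rewrite //= x_min.
  apply: IHk => //; rewrite -ltnS (leq_trans _ lt_k) // ltnS.
  apply: (@ltn_count _ (vlt^~ z) (vlt^~ y) P z _ z_P lt_zy); last by rewrite /= vltxx.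
  by move=> w lt_wz; apply: vlt_trans lt_wz lt_zy.
have := g_sum y_P; rewrite eq_sym neq_xy big_vle_vlt // => /(_ isT).
by move/eqP; rewrite addr_eq0 => /eqP ->.
Qed.

Lemma mobius_char y : y \in P -> mobius P x y = g y.
Proof.
move=> y_P; apply: mob_aux_char => //; rewrite -(count_predT P).
by apply: (@ltn_count _ _ predT _ y) => //; rewrite vltxx.
Qed.

End MobiusCharacterization.

Definition mobius_formula (n : nat) (v : seq nat) : int :=
  (if extremal n v then (-1) ^+ count (fun i => vcoord v i == i) (iota 2 n.-1) else 0)%R.

Lemma mobius_formula_bottom n : mobius_formula n (nseq n 1) = 1%R.
Proof.
have one_i i : 0 < i <= n -> vcoord (nseq n 1) i = 1.
  by move=> lt_i; rewrite /vcoord nth_nseq ifT //; lia.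
rewrite /mobius_formula ifT; last by apply/extremalP => i /one_i ->; left.
rewrite (@eq_in_count _ _ pred0) ?count_pred0 // => i; rewrite mem_iota => lt_i /=.
by rewrite one_i; lia.
Qed.

Lemma nseq1_vle n y : y \in hatN n -> vle (nseq n 1) y.
Proof.
move=> /hatN_coord_bounds[size_y bounds_y]; apply/vleP; rewrite size_nseq size_y.
by split=> // i lt_i; rewrite /vcoord nth_nseq ifT; [case/andP: (bounds_y i lt_i) | lia].
Qed.

Definition toggle (i : nat) (v : seq nat) : seq nat :=
  set_nth 0 v i.-1 (if vcoord v i == 1 then i else 1).

Section Toggle.

Variables (n i : nat).
Hypothesis i_range : 1 < i <= n.

Fact i_neq1 : (i == 1) = false.
Proof. by apply/negbTE; lia. Qed.

Lemma vcoord_toggle v j : 0 < j ->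
  vcoord (toggle i v) j = if j == i then (if vcoord v i == 1 then i else 1) else vcoord v j.
Proof.
move=> j_gt0; rewrite /vcoord /toggle nth_set_nth /=.
by case: (eqVneq j i) => [->|neq_ji]; rewrite ?eqxx // ifF //; apply/negbTE; lia.
Qed.

Lemma size_toggle v : size v = n -> size (toggle i v) = n.
Proof. by move=> size_v; rewrite size_set_nth size_v; lia. Qed.

Lemma extremal_toggle v : extremal n v -> extremal n (toggle i v).
Proof.
move=> /extremalP ext_v; apply/extremalP => j lt_j; rewrite vcoord_toggle; last lia.
case: eqVneq => [->|_]; last exact: ext_v.
by case: ifP => _; [right|left].
Qed.

Lemma toggleK v : size v = n -> extremal n v -> toggle i (toggle i v) = v.
Proof.
move=> size_v /extremalP ext_v; apply: eq_vcoord; first by rewrite !size_toggle.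
move=> j lt_j; rewrite !size_toggle // in lt_j; rewrite !vcoord_toggle; try lia.
case: (eqVneq j i) => [->|//]; rewrite eqxx.
by have [->|->] := ext_v i ltac:(lia); rewrite /= ?eqxx ?i_neq1 /= ?eqxx.
Qed.

Lemma toggle_vle v y : size v = n -> vcoord y i = i -> vle v y -> vle (toggle i v) y.
Proof.
move=> size_v y_i /vleP[size_vy le_vy]; apply/vleP; rewrite size_toggle // -size_v.
split=> // j lt_j; rewrite vcoord_toggle; last lia.
case: (eqVneq j i) => [->|_]; last exact: le_vy.
by rewrite y_i; case: ifP; lia.
Qed.

Lemma mobius_formula_toggle v : extremal n v ->
  mobius_formula n (toggle i v) = (- mobius_formula n v)%R.
Proof.
move=> ext_v; rewrite /mobius_formula extremal_toggle // ext_v.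
apply: (sign_count_flip _ (iota_uniq 2 n.-1) (_ : i \in _)); first by rewrite mem_iota; lia.
  move=> j; rewrite mem_iota => lt_j neq_ji; rewrite vcoord_toggle ?(negbTE neq_ji) //; lia.
rewrite vcoord_toggle ?eqxx; last lia.
have [->|->] := (extremalP n v).1 ext_v i ltac:(lia); rewrite eqxx.
  by rewrite eqxx eq_sym i_neq1.
by rewrite i_neq1 eq_sym i_neq1.
Qed.

End Toggle.

(* Toggling a coordinate [i] at which [y] is maximal is a sign-reversing
   involution on the extremal vectors below [y]. *)
Lemma sum_mobius_formula n y : y \in hatN n -> y != nseq n 1 ->
  (\sum_(z <- hatN n | vle z y) mobius_formula n z = 0)%R.
Proof.
move=> y_in y_neq; have [i i_range y_i] := hatN_max_coord y_in y_neq.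
rewrite (bigID (extremal n)) /= [X in (_ + X)%R]big1 ?addr0; last first.
  by move=> z /andP[_ /negbTE ext_z]; rewrite /mobius_formula ext_z.
rewrite -big_filter.
have mem_below z : z \in [seq z <- hatN n | vle z y && extremal n z] ->
    [/\ vle z y, extremal n z & size z = n].
  by rewrite mem_filter => /andP[/andP[le_zy ext_z] /hatN_coord_bounds[]].
apply: (sum_sign_reversing (f := toggle i)).
- by rewrite filter_uniq // undup_uniq.
- move=> z /mem_below[le_zy ext_z size_z]; have ext_tz := extremal_toggle i_range ext_z.
  by rewrite mem_filter ext_tz (toggle_vle i_range) ?extremal_hatN ?(size_toggle i_range).
- by move=> z /mem_below[_ ext_z size_z]; rewrite (toggleK i_range).
- by move=> z /mem_below[_ ext_z _]; rewrite (mobius_formula_toggle i_range).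
Qed.

Theorem mainTheorem3 (n : nat) (v : seq nat) :
  1 <= n -> v \in hatN n ->
  mobius (hatN n) (nseq n 1) v =
    (if all (fun i => (vcoord v i == 1%N) || (vcoord v i == i)) (iota 1 n)
     then (-1) ^+ (count (fun i => vcoord v i == i) (iota 2 n.-1))
     else 0)%R.
Proof.
move=> _ v_in; apply: (mobius_char (g := mobius_formula n)) v_in.
- exact: undup_uniq.
- exact: nseq1_vle.
- exact: mobius_formula_bottom.
- exact: sum_mobius_formula.
Qed.
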